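(* For any positive integers $k\le n$, $$\frac{n(n+1)(n+2)}{(2,n)}\ \Big|\ (n+k+1)\binom{n+k}{k}\binom{n+1}{k+1}\binom{2k}{k+1},$$ where $(2,n)$ is the greatest common divisor of $2$ and $n$. *)

From mathcomp Require Import all_boot.

From mathcomp Require Import all_boot zify ring.

(* Since (k + 1) C(2k, k + 1) = k C(2k, k), the binomial C(2k, k + 1) is k times the
   Catalan number c_k, and (n + k + 1) C(n + k, k) = (k + 1) C(n + k + 1, k + 1); so the
   right-hand side is k (k + 1) C(n + k + 1, k + 1) C(n + 1, k + 1) c_k.  Absorbing
   k (k + 1) into C(n + 1, k + 1) exhibits a multiple of n (n + 1), absorbing it into
   C(n + k + 1, k + 1) a multiple of (n + 1) (n + 2), and the lcm of these two is
   n (n + 1) (n + 2) / (2, n). *)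

Definition catalan k := 'C(k.*2, k) - 'C(k.*2, k.+1).

Lemma bin_double_succE k : 'C(k.*2, k.+1) = k * catalan k.
Proof.
have := mul_bin_left k.*2 k; rewrite -addnn addnK /catalan => binE.
by rewrite -addnn mulnBr -binE mulSn addnK.
Qed.

Lemma mul_bin_diag2 n j :
  j.+1 * j.+2 * 'C(n.+2, j.+2) = n.+1 * n.+2 * 'C(n, j).
Proof.
by rewrite -mulnA -mul_bin_diag mulnCA -mul_bin_diag mulnA (mulnC n.+2).
Qed.

Lemma mul_bin_left2 m j :
  j.+1 * j.+2 * 'C(m + j.+2, j.+2) = m.+1 * m.+2 * 'C(m + j.+2, j).
Proof.
rewrite -mulnA mul_bin_left mulnCA mul_bin_left mulnA.
by congr (_ * _ * _); lia.
Qed.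

Lemma lcmn_consecutive n :
  lcmn (n * n.+1) (n.+1 * n.+2) = n * n.+1 * n.+2 %/ gcdn 2 n.
Proof.
have gcdE : gcdn (n * n.+1) (n.+1 * n.+2) = n.+1 * gcdn 2 n.
  by rewrite (mulnC n) -muln_gcdr (_ : n.+2 = 2 + n) // gcdnDr gcdnC.
rewrite /lcmn gcdE (mulnC n) -!mulnA divnMl //.
by rewrite mulnCA mulnA.
Qed.

Theorem lemma4p2 (n k : nat) (hk : 0 < k) (hkn : k <= n) :
  (n * n.+1 * n.+2) %/ gcdn 2 n %|
    (n + k).+1 * 'C(n + k, k) * 'C(n.+1, k.+1) * 'C(k.*2, k.+1).
Proof.
rewrite (mul_bin_diag (n + k).+1) bin_double_succE.
case: k hk hkn => [//|j] _; case: n => [//|n] _.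
rewrite -addnS -lcmn_consecutive dvdn_lcm; apply/andP; split.
- rewrite [X in _ %| X](_ : _ = j.+1 * j.+2 * 'C(n.+2, j.+2) *
      ('C(n.+1 + j.+2, j.+2) * catalan j.+1)); last by ring.
  by rewrite mul_bin_diag2 -mulnA dvdn_mulr.
- rewrite [X in _ %| X](_ : _ = j.+1 * j.+2 * 'C(n.+1 + j.+2, j.+2) *
      ('C(n.+2, j.+2) * catalan j.+1)); last by ring.
  by rewrite mul_bin_left2 -mulnA dvdn_mulr.
Qed.
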